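(* Let $n\ge 2$ and let $L$ be a totally real Galois extension of $\mathbb{Q}$ with $\operatorname{Gal}(L/\mathbb{Q})\cong(\mathbb{Z}/2\mathbb{Z})^n$. Let $E\subset\mathcal{O}_L^*$ be the subgroup generated by the fundamental units $u_K>1$ of the $2^n-1$ quadratic subfields $K$ of $L$. Then every nonzero $w\in\bigwedge^2\operatorname{LOG}(E)$ satisfies \[ \|w\|_1 \geq 2^{2n-1}\log\left(\frac{1+\sqrt5}{2}\right)\log(1+\sqrt2). \]
   Context: For a number field $L$, let $\mathcal{A}_L$ be its set of Archimedean places. Define $\operatorname{LOG}:\mathcal{O}_L^* \to \mathbb{R}^{\mathcal{A}_L}$ by $(\operatorname{LOG}(\gamma))_v = e_v \log|\gamma|_v$, where $e_v=1$ if $v$ is real and $e_v=2$ if $v$ is complex. Let $\{\delta^v\}$ be the standard orthonormal basis of $\mathbb{R}^{\mathcal{A}_L}$; for each $2$-element subset $I=\{v_1,v_2\}$ of $\mathcal{A}_L$ (with a fixed ordering) put $\delta^I=\delta^{v_1}\wedge\delta^{v_2}$. For $w=\sum_I c_I\delta^I\in\bigwedge^2\mathbb{R}^{\mathcal{A}_L}$, $\|w\|_1=\sum_I|c_I|$. The fundamental unit $u_K>1$ of a real quadratic subfield $K$ (with $L$ embedded in $\mathbb{R}$) generates the units of $K$ modulo $\pm1$. $\bigwedge^2\operatorname{LOG}(E)$ is the subgroup of $\bigwedge^2\mathbb{R}^{\mathcal{A}_L}$ generated by $\operatorname{LOG}(\epsilon_1)\wedge\operatorname{LOG}(\epsilon_2)$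 for $\epsilon_1,\epsilon_2\in E$. *)

From HB Require Import structures.
From mathcomp Require Import all_boot all_order all_algebra all_fingroup all_field.
From mathcomp Require Import all_classical all_reals all_analysis.
Set Implicit Arguments. Unset Strict Implicit. Unset Printing Implicit Defensive.
Import Order.TTheory GRing.Theory Num.Theory.
Local Open Scope ring_scope.

Section MultiquadDefs.
Variable L : splittingFieldType rat.

Definition is_alg_integer (x : L) : Prop :=
  exists p : {poly int}, (p \is monic) && root (map_poly intr p) x.

Definition is_OL_unit (x : L) : Prop :=
  x != 0 /\ is_alg_integer x /\ is_alg_integer x^-1.

Definition totally_real : Prop :=
  forall (f : {rmorphism L -> algC}) (x : L), f x \is Num.real.

Definition quadratic_subfield (K : {subfield L}) : Prop := \dim K = 2%N.

Variable R : realType.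

Definition fundamental_unit (iota : {rmorphism L -> R}) (K : {subfield L})
    (u : L) : Prop :=
  [/\ u \in K, is_OL_unit u, 1 < iota u &
      forall x : L, x \in K -> is_OL_unit x ->
        exists (b : bool) (k : int), x = (-1) ^+ b * u ^ k].

Inductive in_E (u : {subfield L} -> L) : L -> Prop :=
  | E_gen K : quadratic_subfield K -> in_E u (u K)
  | E_one : in_E u 1
  | E_mul x y : in_E u x -> in_E u y -> in_E u (x * y)
  | E_inv x : in_E u x -> in_E u x^-1.

(* Archimedean places of L are the embeddings iota \o sigma,
   sigma in Gal(L/Q) = gal_of fullv; all real, so e_v = 1 *)
Definition place := gal_of (fullv : {vspace L}).

Definition LOG (iota : {rmorphism L -> R}) (g : L) : place -> R :=
  fun s => ln `|iota (s g)|.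

(* elements of /\^2 R^places, stored as (antisymmetric) coefficient
   functions: w s t is the coefficient on delta^s /\ delta^t *)
Definition wedge (x y : place -> R) : place -> place -> R :=
  fun s t => x s * y t - x t * y s.

Inductive in_wedge2_LOG (iota : {rmorphism L -> R}) (E : L -> Prop) :
    (place -> place -> R) -> Prop :=
  | W_zero : in_wedge2_LOG iota E (fun _ _ => 0)
  | W_add w e1 e2 : in_wedge2_LOG iota E w -> E e1 -> E e2 ->
      in_wedge2_LOG iota E (fun s t => w s t + wedge (LOG iota e1) (LOG iota e2) s t)
  | W_sub w e1 e2 : in_wedge2_LOG iota E w -> E e1 -> E e2 ->
      in_wedge2_LOG iota E (fun s t => w s t - wedge (LOG iota e1) (LOG iota e2) s t).

(* ||w||_1 = sum over 2-element subsets {s,t} (ordered by enum_rank) *)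
Definition wedge_norm1 (w : place -> place -> R) : R :=
  \sum_(s : place) \sum_(t : place | (enum_rank s < enum_rank t)%N) `|w s t|.

End MultiquadDefs.

From HB Require Import structures.
From mathcomp Require Import all_boot all_order all_algebra all_fingroup all_field.
From mathcomp Require Import all_classical all_reals all_analysis.
From mathcomp Require Import zify ring lra.
Import Order.TTheory GRing.Theory Num.Theory.
Set Implicit Arguments. Unset Strict Implicit. Unset Printing Implicit Defensive.
Local Open Scope ring_scope.

(* Each [u_K] is a quadratic unit whose Galois conjugate is [+-u_K^-1], so
   [LOG u_K = ln u_K * chi_K] for the quadratic character [chi_K] of
   [Gal(L/Q)] with kernel [Gal(L/K)]; distinct [K] give orthogonal characters.
   Hence for [w] in [/\^2 LOG(E)] the coefficients [<w, chi_K (x) chi_K'>] are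
   integer multiples of [N^2 ln u_K ln u_K'] with [N = 2^n], and they do not all
   vanish when [w <> 0], since [w] lies in the span of the [chi_K (x) chi_K'].
   A nonzero coefficient has [K <> K'] by antisymmetry and is at most
   [2 ||w||_1]. Finally [u_K >= (1 + sqrt 5) / 2], and [u_K < 1 + sqrt 2] only
   when [u_K = (1 + sqrt 5) / 2], which happens for at most one [K]. *)

Lemma int_mul_eq1 (k m : int) : k * m = 1 -> m = 1 \/ m = -1.
Proof. by move/intUnitRing.unitzPl; rewrite qualifE => /orP[]/eqP->; [left|right]. Qed.

Lemma rat_int_unit (c c' : rat) : c \is a Num.int -> c' \is a Num.int -> c' * c = 1 ->
  c = 1 \/ c = -1.
Proof.
move=> /intrP[m ->] /intrP[k ->] /eqP; rewrite -rmorphM -(rmorph1 intr) eqr_int.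
by case/eqP/int_mul_eq1=> ->; [left|right].
Qed.

(* Gauss's lemma: [q] is a rational multiple of a factor of [p] in [{poly int}]. *)
Lemma monic_dvdp_int (q : {poly rat}) (p : {poly int}) :
  q \is monic -> p \is monic -> q %| map_poly intr p -> q \is a polyOver Num.int.
Proof.
move=> /monicP q1 /monicP p1 /dvdpP_rat_int[q' [a _ qE] [r pE]].
have a_int : a \is a Num.int.
  move: q1; rewrite qE lead_coefZ (lead_coef_map_inj (@intr_inj rat)) //.
  have : lead_coef r * lead_coef q' = 1 by rewrite mulrC -lead_coefM -pE.
  case/int_mul_eq1 => ->; first by rewrite mulr1 => ->.
  by rewrite mulrN1 => /(canRL opprK) ->; rewrite rpredN.
apply/polyOverP => i; rewrite qE coefZ coef_map rpredM ?intr_int //.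
Qed.

Section Dim2Subfield.
Variables (F : fieldType) (L : fieldExtType F).

Lemma scalar_sum_eq0 (x : L) (a b : F) :
  x \notin 1%VS -> a *: x + b%:A = 0 -> a = 0 /\ b = 0.
Proof.
move=> x1 e; have a0 : a = 0.
  apply/eqP; apply: contraNT x1 => a0; move/eqP: e; rewrite addr_eq0 => /eqP ax.
  by rewrite -(scalerK a0 x) ax rpredZ // rpredN rpredZ // mem1v.
by split=> //; move/eqP: e; rewrite a0 scale0r add0r scaler_eq0 oner_eq0 orbF => /eqP.
Qed.

Lemma dim2_subfield_span (K : {subfield L}) (v : L) :
  \dim K = 2 -> v \in K -> v \notin 1%VS -> (K : {vspace L}) = <<[:: v; 1%R]>>%VS.
Proof.
move=> dimK vK v1.
have free_v1 : free [:: v; 1%R] by rewrite free_cons span_seq1 v1 seq1_free oner_eq0.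
apply/esym/eqP; rewrite eqEdim dimK (eqP free_v1) /= leqnn andbT.
by apply/span_subvP => y; rewrite !inE => /orP[]/eqP->; rewrite ?mem1v.
Qed.

Lemma dim2_subfield_eq (K K' : {subfield L}) (v : L) :
  \dim K = 2 -> \dim K' = 2 -> v \in K -> v \in K' -> v \notin 1%VS -> K = K'.
Proof.
move=> dimK dimK' vK vK' v1; apply: val_inj => /=.
by rewrite (dim2_subfield_span dimK vK v1) (dim2_subfield_span dimK' vK' v1).
Qed.

Lemma dim2_subfield_sqr (K : {subfield L}) (v : L) :
  \dim K = 2 -> v \in K -> v \notin 1%VS -> exists a b : F, v ^+ 2 = a *: v + b%:A.
Proof.
move=> dimK vK v1; have : v ^+ 2 \in K by rewrite rpredX.
rewrite (dim2_subfield_span dimK vK v1) span_cons span_seq1.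
by case/memv_addP=> _ /vlineP[a ->] [_ /vlineP[b ->] ->]; exists a, b.
Qed.

End Dim2Subfield.

Section AlgebraicIntegers.
Variable L : splittingFieldType rat.
Local Notation mapQ := (map_poly (in_alg L)).

Lemma map_poly_intr_alg (p : {poly int}) : map_poly intr p = mapQ (map_poly intr p).
Proof. by rewrite -map_poly_comp; apply: eq_map_poly => z /=; rewrite scaler_int. Qed.

Lemma alg_integer_minpoly_int (x : L) (q : {poly rat}) :
  is_alg_integer x -> q \is monic -> root (mapQ q) x ->
  (forall r : {poly rat}, (size r < size q)%N -> root (mapQ r) x -> r = 0) ->
  q \is a polyOver Num.int.
Proof.
case=> p /andP[p_monic px] q_monic qx q_min; apply: (monic_dvdp_int q_monic p_monic).
apply/modp_eq0P; apply: q_min; first by rewrite ltn_modp monic_neq0.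
move: px; rewrite map_poly_intr_alg {1}(divp_eq (map_poly intr p) q).
by rewrite !rmorphD rmorphM /= rootE hornerD hornerM (rootP qx) mulr0 add0r.
Qed.

Lemma alg_integer_rat (c : rat) : is_alg_integer (c%:A : L) -> c \is a Num.int.
Proof.
move=> c_int; have /polyOverP/(_ 0%N) : 'X - c%:P \is a polyOver Num.int.
  apply: (alg_integer_minpoly_int c_int (monicXsubC c)).
    by rewrite map_polyXsubC /= root_XsubC.
  move=> r; rewrite size_XsubC ltnS => /size1_polyC ->.
  by rewrite map_polyC rootC /= scaler_eq0 oner_eq0 orbF => /eqP ->.
by rewrite coefB coefX coefC sub0r rpredN.
Qed.

Lemma OL_unit_rat (c : rat) : is_OL_unit (c%:A : L) -> c = 1 \/ c = -1.
Proof.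
case=> c0 [c_int cV_int]; apply: (rat_int_unit (c' := c^-1)).
- exact: alg_integer_rat.
- by apply: alg_integer_rat; have /= -> := fmorphV (in_alg L) c.
by rewrite mulVf //; apply: contraNneq c0 => ->; rewrite scale0r.
Qed.

Lemma alg_integer_quadratic_int (x : L) (a b : rat) :
  x \notin 1%VS -> is_alg_integer x -> x ^+ 2 = a *: x + b%:A ->
  a \is a Num.int /\ b \is a Num.int.
Proof.
move=> x1 x_int e; pose q := Poly [:: -b; -a; 1].
have qE : q = [:: -b; -a; 1] :> seq rat by rewrite (@PolyK _ 0) //= oner_eq0.
have /polyOverP q_int : q \is a polyOver Num.int.
  apply: alg_integer_minpoly_int x_int _ _ _; first by rewrite monicE lead_coefE qE.
    rewrite rootE map_Poly horner_Poly /= mul0r add0r scale1r mul1r mulrDl -expr2 e.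
    by rewrite mulr_algl !scaleNr addrAC addrK subrr.
  move=> r; rewrite qE /= => r_small; rewrite rootE.
  rewrite (@horner_coef_wide _ 2) ?size_map_poly // !big_ord_recr big_ord0 /=.
  rewrite add0r !coef_map /= expr0 mulr1 expr1 !mulr_algl addrC.
  move/eqP/(scalar_sum_eq0 x1)=> -[r1 r0]; apply/polyP => -[|[|i]]; rewrite coef0 //.
  by rewrite nth_default // -ltnS (leq_trans r_small).
by have := q_int 0%N; have := q_int 1%N; rewrite !coef_Poly /= !rpredN.
Qed.

End AlgebraicIntegers.

Lemma OL_unit_quadratic (L : splittingFieldType rat) (K : {subfield L}) (u : L) :
  quadratic_subfield K -> u \in K -> is_OL_unit u -> u \notin 1%VS ->
  exists m n : int, (n = 1 \/ n = -1) /\ u ^+ 2 = m%:~R * u - n%:~R.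
Proof.
move=> dimK uK [u0 [u_int uV_int]] u1.
have uV1 : u^-1 \notin 1%VS by rewrite (memvV 1%AS).
have [a [b e]] := dim2_subfield_sqr dimK uK u1.
have [a' [b' e']] := dim2_subfield_sqr dimK (etrans (memvV K u) uK) uV1.
have [/intrP[m aE] b_int] := alg_integer_quadratic_int u1 u_int e.
have [_ b'_int] := alg_integer_quadratic_int uV1 uV_int e'.
have bb' : b' * b = 1.
  have uVsqr : 1 = a *: u^-1 + b *: u^-1 ^+ 2.
    have := congr1 ( *%R^~ (u^-1 ^+ 2)) e; rewrite -exprMn mulfV // expr1n => ->.
    by rewrite mulrDl -scalerAl mulr_algl expr2 mulrA mulfV ?mul1r.
  suff : (a + b * a') *: u^-1 + (b * b' - 1)%:A = 0.
    by case/(scalar_sum_eq0 uV1) => _ /eqP; rewrite subr_eq0 mulrC => /eqP.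
  rewrite e' scalerDr !scalerA addrA -scalerDl in uVsqr.
  by rewrite scalerBl scale1r addrA -uVsqr subrr.
have [b1|bN1] := rat_int_unit b_int b'_int bb'.
  exists m, (-1); split; first by right.
  by rewrite e aE b1 scaler_int mulrzl scale1r rmorphN1 opprK.
exists m, 1; split; first by left.
by rewrite e aE bN1 scaler_int mulrzl scaleN1r rmorph1.
Qed.

Section IntMultiples.
Variable R : realDomainType.

Definition int_multiple (r x : R) := exists m : int, x = m%:~R * r.

Lemma int_multiple0 r : int_multiple r 0.
Proof. by exists 0; rewrite mul0r. Qed.

Lemma int_multiple_id r : int_multiple r r.
Proof. by exists 1; rewrite mul1r. Qed.

Lemma int_multipleD r x y :
  int_multiple r x -> int_multiple r y -> int_multiple r (x + y).
Proof. by move=> [m ->] [k ->]; exists (m + k); rewrite rmorphD mulrDl. Qed.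

Lemma int_multipleN r x : int_multiple r x -> int_multiple r (- x).
Proof. by move=> [m ->]; exists (- m); rewrite rmorphN mulNr. Qed.

Lemma int_multipleB r x y :
  int_multiple r x -> int_multiple r y -> int_multiple r (x - y).
Proof. by move=> rx /int_multipleN; apply: int_multipleD. Qed.

Lemma int_multipleM r r' x y :
  int_multiple r x -> int_multiple r' y -> int_multiple (r * r') (x * y).
Proof. by move=> [m ->] [k ->]; exists (m * k); rewrite rmorphM mulrACA. Qed.

Lemma int_multiple_le_norm r x : 0 <= r -> int_multiple r x -> x != 0 -> r <= `|x|.
Proof.
move=> r_ge0 [m ->]; rewrite mulf_eq0 negb_or intr_eq0 => /andP[m0 _].
rewrite normrM (ger0_norm r_ge0) -[leLHS]mul1r ler_wpM2r // -intr_norm.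
by rewrite -(rmorph1 intr) ler_int -gtz0_ge1 normr_gt0.
Qed.

End IntMultiples.

Section BilinearForms.
Variables (T : finType) (R : realDomainType).
Implicit Types (x y c : T -> R) (w V : T -> T -> R).

Definition dotv x y := \sum_s x s * y s.
Definition dotm w V := \sum_s dotv (w s) (V s).
Definition tensor x y s t := x s * y t.

Lemma dotvC x y : dotv x y = dotv y x.
Proof. by apply: eq_bigr => s _; rewrite mulrC. Qed.

Lemma dotmC w V : dotm w V = dotm V w.
Proof. by apply: eq_bigr => s _; rewrite dotvC. Qed.

Lemma dotv0l y : dotv (fun _ => 0) y = 0.
Proof. by apply: big1 => s _; rewrite mul0r. Qed.

Lemma dotvDl x x' y : dotv (fun s => x s + x' s) y = dotv x y + dotv x' y.
Proof. by rewrite -big_split; apply: eq_bigr => s _; rewrite mulrDl. Qed.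

Lemma dotvNl x y : dotv (fun s => - x s) y = - dotv x y.
Proof. by rewrite -sumrN; apply: eq_bigr => s _; rewrite mulNr. Qed.

Lemma dotvZl r x y : dotv (fun s => r * x s) y = r * dotv x y.
Proof. by rewrite mulr_sumr; apply: eq_bigr => s _; rewrite mulrA. Qed.

Lemma dotm0l V : dotm (fun _ _ => 0) V = 0.
Proof. by apply: big1 => s _; rewrite dotv0l. Qed.

Lemma dotmDl w w' V : dotm (fun s t => w s t + w' s t) V = dotm w V + dotm w' V.
Proof. by rewrite -big_split; apply: eq_bigr => s _; rewrite dotvDl. Qed.

Lemma dotmBl w w' V : dotm (fun s t => w s t - w' s t) V = dotm w V - dotm w' V.
Proof.
rewrite -sumrB; apply: eq_bigr => s _.
by rewrite (dotvDl (w s) (fun t => - w' s t)) dotvNl.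
Qed.

Lemma dotm_tensorl x y V : dotm (tensor x y) V = dotv x (fun s => dotv (V s) y).
Proof.
apply: eq_bigr => s _; rewrite /dotv mulr_sumr; apply: eq_bigr => t _.
by rewrite /tensor -mulrA [y t * _]mulrC.
Qed.

Lemma dotv_exchange V x y :
  dotv (fun t => dotv x (fun s => V s t)) y = dotv x (fun s => dotv (V s) y).
Proof.
rewrite /dotv; under eq_bigr do rewrite mulr_suml; rewrite exchange_big /=.
by apply: eq_bigr => s _; rewrite mulr_sumr; apply: eq_bigr => t _; rewrite mulrA.
Qed.

Lemma dotm_tensor x y x' y' :
  dotm (tensor x y) (tensor x' y') = dotv x x' * dotv y y'.
Proof.
rewrite dotm_tensorl mulr_suml; apply: eq_bigr => s _.
by rewrite /tensor dotvZl dotvC mulrA.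
Qed.

Lemma dotm_self_eq0 w : dotm w w = 0 -> w = fun _ _ => 0.
Proof.
have sqr_ge0' (r : R) : 0 <= r * r by rewrite -expr2 sqr_ge0.
move=> w0; apply/funext => s; apply/funext => t; apply/eqP.
have ws0 : dotv (w s) (w s) = 0.
  by apply: (psumr_eq0P _ w0) => // s' _; apply: sumr_ge0 => t' _; apply: sqr_ge0'.
have /eqP : w s t * w s t = 0 by apply: (psumr_eq0P _ ws0) => // t' _; apply: sqr_ge0'.
by rewrite mulf_eq0 orbb.
Qed.

Section Span.
Variable Q : (T -> R) -> Prop.

(* The spans of [Q] and of [Q (x) Q], described as double orthogonal
   complements so that no finite enumeration of [Q] is needed. *)
Definition in_span x := forall v, (forall c, Q c -> dotv v c = 0) -> dotv x v = 0.
Definition in_span2 w :=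
  forall V, (forall c c', Q c -> Q c' -> dotm (tensor c c') V = 0) -> dotm w V = 0.

Lemma in_span0 : in_span (fun _ => 0).
Proof. by move=> v _; rewrite dotv0l. Qed.

Lemma in_spanZ r c : Q c -> in_span (fun s => r * c s).
Proof. by move=> Qc v vQ; rewrite dotvZl dotvC vQ ?mulr0. Qed.

Lemma in_spanD x y : in_span x -> in_span y -> in_span (fun s => x s + y s).
Proof. by move=> Sx Sy v vQ; rewrite dotvDl Sx ?Sy ?addr0. Qed.

Lemma in_spanN x : in_span x -> in_span (fun s => - x s).
Proof. by move=> Sx v vQ; rewrite dotvNl Sx ?oppr0. Qed.

Lemma in_span2_tensor x y : in_span x -> in_span y -> in_span2 (tensor x y).
Proof.
move=> Sx Sy V VQ; rewrite dotm_tensorl -dotv_exchange dotvC.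
apply: Sy => c' Qc'; rewrite dotv_exchange; apply: Sx => c Qc.
by rewrite dotvC -dotm_tensorl VQ.
Qed.

Lemma in_span2_0 : in_span2 (fun _ _ => 0).
Proof. by move=> V _; rewrite dotm0l. Qed.

Lemma in_span2D w w' : in_span2 w -> in_span2 w' -> in_span2 (fun s t => w s t + w' s t).
Proof. by move=> Sw Sw' V VQ; rewrite dotmDl Sw ?Sw' ?addr0. Qed.

Lemma in_span2B w w' : in_span2 w -> in_span2 w' -> in_span2 (fun s t => w s t - w' s t).
Proof. by move=> Sw Sw' V VQ; rewrite dotmBl Sw ?Sw' ?subr0. Qed.

Lemma in_span2_eq0 w : in_span2 w ->
  (forall c c', Q c -> Q c' -> dotm (tensor c c') w = 0) -> w = fun _ _ => 0.
Proof. by move=> Sw wQ; apply: dotm_self_eq0; apply: Sw. Qed.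

End Span.

Section Antisymmetric.
Variable w : T -> T -> R.
Hypothesis w_antisym : forall s t, w s t = - w t s.

Lemma antisym_diag s : w s s = 0.
Proof. by have := w_antisym s s; lra. Qed.

Lemma dotm_tensor_diag c : dotm (tensor c c) w = 0.
Proof.
suff : dotm (tensor c c) w = - dotm (tensor c c) w by lra.
rewrite /dotm /dotv {1}exchange_big -sumrN; apply: eq_bigr => t _.
by rewrite -sumrN; apply: eq_bigr => s _; rewrite /tensor [w s t]w_antisym mulrN [c s * _]mulrC.
Qed.

Lemma sum_norm_antisym :
  \sum_s \sum_t `|w s t| = 2 * \sum_s \sum_(t | (enum_rank s < enum_rank t)%N) `|w s t|.
Proof.
pose lt_rank (s t : T) := (enum_rank s < enum_rank t)%N.
have split_row s : \sum_t `|w s t| =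
    \sum_(t | lt_rank s t) `|w s t| + \sum_(t | lt_rank t s) `|w s t|.
  rewrite (bigID (lt_rank s)) /=; congr (_ + _); rewrite big_mkcond [RHS]big_mkcond.
  apply: eq_bigr => t _; have [->|ne] := eqVneq t s.
    by rewrite /lt_rank ltnn antisym_diag normr0.
  by rewrite /lt_rank -leqNgt leq_eqVlt val_eqE (inj_eq enum_rank_inj) (negPf ne).
rewrite (eq_bigr _ (fun s _ => split_row s)) big_split /= mulr_natl mulr2n.
congr (_ + _); rewrite !pair_big_dep /=.
rewrite (reindex_inj (can_inj (@swap_pairK T T))) /=.
by apply: eq_bigr => -[s t] _; rewrite w_antisym normrN.
Qed.

End Antisymmetric.

Lemma norm_dotm_tensor_le c c' w : (forall s, `|c s| = 1) -> (forall t, `|c' t| = 1) ->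
  `|dotm (tensor c c') w| <= \sum_s \sum_t `|w s t|.
Proof.
move=> c1 c'1; apply: le_trans (ler_norm_sum _ _ _) _; apply: ler_sum => s _.
apply: le_trans (ler_norm_sum _ _ _) _; apply: ler_sum => t _.
by rewrite /tensor !normrM c1 c'1 !mul1r.
Qed.

End BilinearForms.

Local Notation golden := ((1 + Num.sqrt 5) / 2).
Local Notation silver := (1 + Num.sqrt 2).

Section QuadraticUnitBound.
Variable R : rcfType.

Lemma sqrtr_le (c y : R) : 0 <= y -> c <= y ^+ 2 -> Num.sqrt c <= y.
Proof. by move=> y_ge0 cy; rewrite -(ger0_norm y_ge0) -sqrtr_sqr ler_wsqrtr. Qed.

Lemma golden_gt1 : 1 < golden :> R.
Proof.
have := sqrtr_ge0 (5 : R); have : Num.sqrt (5 : R) ^+ 2 = 5 by rewrite sqr_sqrtr.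
by nra.
Qed.

Lemma golden_le_silver : golden <= silver :> R.
Proof.
have := sqrtr_ge0 (5 : R); have : Num.sqrt (5 : R) ^+ 2 = 5 by rewrite sqr_sqrtr.
have := sqrtr_ge0 (2 : R); have : Num.sqrt (2 : R) ^+ 2 = 2 by rewrite sqr_sqrtr.
by nra.
Qed.

(* Outside [(m, n) = (1, -1)] one has [m >= 3] if [n = 1] and [m >= 2] if
   [n = -1]; either way [(x - 1)^2 >= 2]. *)
Lemma quadratic_unit_cases (x : R) (m n : int) :
  1 < x -> x ^+ 2 = m%:~R * x - n%:~R -> n = 1 \/ n = -1 ->
  silver <= x \/ [/\ m = 1, n = -1 & x = golden].
Proof.
move=> x_gt1 x_sqr n_pm1.
have silver_le : 2 <= (x - 1) ^+ 2 -> silver <= x.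
  by move=> x_sqr2; rewrite -lerBrDl sqrtr_le //; lra.
case: n_pm1 => nE; rewrite nE ?rmorph1 ?rmorphN1 ?opprK in x_sqr *.
- have m_ge3 : (3 <= m)%R.
    have : (2 < m)%R by rewrite -(ltr_int R); nra.
    by lia.
  have m3 : (3 : R) <= m%:~R by rewrite (ler_int R 3).
  have x_ge2 : 2 <= x by rewrite leNgt; apply/negP => x_lt2; nra.
  by left; apply: silver_le; nra.
- have [m1|m_ge2] : m = 1 \/ (2 <= m)%R.
    have : (0 < m)%R by rewrite -(ltr_int R); nra.
    by lia.
  + right; split=> //; rewrite m1 /= mul1r in x_sqr.
    have -> : Num.sqrt (5 : R) = 2 * x - 1.
      by rewrite -(ger0_norm (_ : 0 <= 2 * x - 1)) -?sqrtr_sqr; [congr Num.sqrt; nra|lra].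
    by field.
  + have m2 : (2 : R) <= m%:~R by rewrite (ler_int R 2).
    by left; apply: silver_le; nra.
Qed.

End QuadraticUnitBound.

Lemma sum_morph_eq0 (gT : finGroupType) (R : idomainType) (f : gT -> R) (g : gT) :
  {morph f : x y / (x * y)%g >-> x * y} -> f g != 1 -> \sum_x f x = 0.
Proof.
move=> fM fg1; have : \sum_x f x = f g * \sum_x f x.
  by rewrite mulr_sumr (reindex_inj (mulgI g)) /=; apply: eq_bigr => x _; rewrite fM.
move/eqP; rewrite -subr_eq0 -{1}[\sum_x f x]mul1r -mulrBl mulf_eq0 subr_eq0.
by rewrite eq_sym (negPf fg1) => /eqP.
Qed.

Section GaloisCharacters.
Variables (L : splittingFieldType rat) (R : realDomainType).
Implicit Types (v : L) (s g : place L).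

Definition chi v s : R := if s v == v then 1 else -1.

Lemma normr_chi v s : `|chi v s| = 1.
Proof. by rewrite /chi; case: ifP; rewrite ?normrN normr1. Qed.

Lemma chi_sqr v s : chi v s * chi v s = 1.
Proof. by rewrite /chi; case: ifP; rewrite ?mulrNN mulr1. Qed.

Lemma dotv_chi_self v : dotv (chi v) (chi v) = #|{: place L}|%:R.
Proof. by rewrite /dotv (eq_bigr _ (fun s _ => chi_sqr v s)) sumr_const. Qed.

Section QuadraticElement.
Variables (v : L) (m n : int).
Hypothesis v_irr : v \notin 1%VS.
Hypothesis v_sqr : v ^+ 2 = m%:~R * v - n%:~R.

Lemma gal_quadratic s : s v = v \/ s v = m%:~R - v.
Proof.
have sv_sqr : s v ^+ 2 = m%:~R * s v - n%:~R.
  by rewrite -rmorphXn v_sqr rmorphB rmorphM /= !rmorph_int.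
have : (s v - v) * (s v - (m%:~R - v)) = 0.
  by rewrite mulrBr !mulrBl -expr2 sv_sqr; ring: v_sqr.
by move/eqP; rewrite mulf_eq0 !subr_eq0 => /orP[]/eqP; [left|right].
Qed.

Lemma conj_neq : m%:~R - v != v.
Proof.
apply: contraNneq v_irr => mv_v.
have m2v : m%:~R = v *+ 2 by rewrite mulr2n -{1}mv_v subrK.
have -> : v = (2%:R : rat)^-1 *: (m%:~R : rat)%:A.
  by rewrite scaler_int m2v -scaler_nat scalerK.
by rewrite rpredZ // rpredZ // mem1v.
Qed.

Lemma chiM s g : chi v (s * g)%g = chi v s * chi v g.
Proof.
have conj_conj : g (m%:~R - v) = m%:~R - g v by rewrite rmorphB /= rmorph_int.
rewrite /chi galM ?memvf //; have [-> | ->] := gal_quadratic s.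
  by rewrite eqxx mul1r.
rewrite (negPf conj_neq) conj_conj; have [-> | ->] := gal_quadratic g.
  by rewrite (negPf conj_neq) eqxx mulr1.
by rewrite opprB addrC subrK eqxx (negPf conj_neq) mulrNN mulr1.
Qed.

End QuadraticElement.

Lemma dotv_chi_eq0 v w (mv nv mw nw : int) g :
  v \notin 1%VS -> v ^+ 2 = mv%:~R * v - nv%:~R ->
  w \notin 1%VS -> w ^+ 2 = mw%:~R * w - nw%:~R ->
  chi v g != chi w g -> dotv (chi v) (chi w) = 0.
Proof.
move=> v_irr v_sqr w_irr w_sqr vw_g; apply: (sum_morph_eq0 (g := g)).
  by move=> s t /=; rewrite (chiM v_irr v_sqr) (chiM w_irr w_sqr) mulrACA.
apply: contra vw_g => /eqP vw1.
by rewrite -[chi v g]mulr1 -(chi_sqr w g) mulrA vw1 mul1r.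
Qed.

End GaloisCharacters.

Section Logarithms.
Variables (L : splittingFieldType rat) (R : realType) (iota : {rmorphism L -> R}).
Local Notation LOG := (LOG iota).

Lemma LOG1 : LOG 1 = fun _ => 0.
Proof. by apply/funext => s; rewrite /LOG !rmorph1 normr1 ln1. Qed.

Lemma LOGM x y : x != 0 -> y != 0 -> LOG (x * y) = fun s => LOG x s + LOG y s.
Proof.
move=> x0 y0; apply/funext => s.
by rewrite /LOG !rmorphM normrM lnM // posrE normr_gt0 !fmorph_eq0.
Qed.

Lemma LOGV x : x != 0 -> LOG x^-1 = fun s => - LOG x s.
Proof.
move=> x0; apply/funext => s.
rewrite /LOG !fmorphV normrV ?unitfE ?normr_eq0 ?fmorph_eq0 // lnV //.
by rewrite posrE normr_gt0 !fmorph_eq0.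
Qed.

Lemma ln_le_ln (x y : R) : 0 < x -> x <= y -> ln x <= ln y.
Proof. by move=> x_gt0 xy; rewrite ler_ln ?posrE // (lt_le_trans x_gt0 xy). Qed.

Lemma OL_unit_irr u : is_OL_unit u -> 1 < iota u -> u \notin 1%VS.
Proof.
move=> u_unit u_gt1; apply/negP => /vlineP[c uE]; rewrite uE in u_unit u_gt1.
case: (OL_unit_rat u_unit) => cE; move: u_gt1.
  by rewrite cE scale1r rmorph1 ltxx.
by rewrite cE scaleN1r rmorphN rmorph1; lra.
Qed.

(* The Galois conjugate [m - v] of [v] is [n / v], of absolute value [1 / v]. *)
Lemma LOG_quadratic_unit v (m n : int) :
  v \notin 1%VS -> v ^+ 2 = m%:~R * v - n%:~R -> n = 1 \/ n = -1 -> 0 < iota v ->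
  LOG v = fun s => ln (iota v) * chi R v s.
Proof.
move=> v_irr v_sqr n_pm1 v_gt0; apply/funext => s; rewrite /LOG /chi.
have [-> | ->] := gal_quadratic v_sqr s; first by rewrite eqxx mulr1 gtr0_norm.
rewrite (negPf (conj_neq m v_irr)) mulrN1.
have v0 : v != 0 by apply: contraNneq v_irr => ->; rewrite mem0v.
have -> : m%:~R - v = n%:~R * v^-1.
  by apply: (mulIf v0); rewrite mulrBl -expr2 v_sqr mulfVK //; ring.
rewrite rmorphM fmorphV rmorph_int normrM normrV ?unitfE ?gt_eqF //.
have -> : `|n%:~R : R| = 1 by case: n_pm1 => ->; rewrite ?rmorphN1 ?normrN normr1.
by rewrite mul1r gtr0_norm ?lnV ?posrE.
Qed.

End Logarithms.

Section MultiquadraticUnits.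
Variables (L : splittingFieldType rat) (R : realType) (iota : {rmorphism L -> R}).
Variable u : {subfield L} -> L.
Hypothesis galL : galois 1 {:L}.
Hypothesis u_fund : forall K, quadratic_subfield K -> fundamental_unit iota K (u K).

Local Notation N := (#|{: place L}|%:R : R).
Local Notation a K := (ln (iota (u K))).
Local Notation chiK K := (chi R (u K)).
Let Q (c : place L -> R) := exists2 K, quadratic_subfield K & c = chiK K.

Section QuadraticSubfield.
Variable K : {subfield L}.
Hypothesis quadK : quadratic_subfield K.

Lemma u_gt1 : 1 < iota (u K).
Proof. by case: (u_fund quadK). Qed.

Lemma u_in : u K \in K.
Proof. by case: (u_fund quadK). Qed.

Lemma u_irr : u K \notin 1%VS.
Proof. by case: (u_fund quadK) => _ u_unit u_gt1' _; apply: OL_unit_irr u_unit u_gt1'. Qed.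

Lemma u_sqr : exists m n : int, (n = 1 \/ n = -1) /\ u K ^+ 2 = m%:~R * u K - n%:~R.
Proof.
by case: (u_fund quadK) => uK u_unit _ _; apply: OL_unit_quadratic quadK uK u_unit u_irr.
Qed.

Lemma LOG_u : LOG iota (u K) = fun s => a K * chiK K s.
Proof.
have [m [n [n_pm1 u_sqr']]] := u_sqr.
by apply: LOG_quadratic_unit u_irr u_sqr' n_pm1 _; apply: lt_trans u_gt1.
Qed.

Lemma iota_u_cases : silver <= iota (u K) \/ iota (u K) = golden.
Proof.
have [m [n [n_pm1 u_sqr']]] := u_sqr.
have iota_sqr : iota (u K) ^+ 2 = m%:~R * iota (u K) - n%:~R.
  by rewrite -rmorphXn u_sqr' rmorphB rmorphM /= !rmorph_int.
by case: (quadratic_unit_cases u_gt1 iota_sqr n_pm1) => [|[]]; [left|right].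
Qed.

Lemma ln_golden_le_a : ln golden <= a K.
Proof.
have golden_gt0 : 0 < golden :> R := lt_trans ltr01 (golden_gt1 R).
have [le|->//] := iota_u_cases.
exact: ln_le_ln golden_gt0 (le_trans (golden_le_silver R) le).
Qed.

End QuadraticSubfield.

Lemma ln_golden_silver_le_a K K' : quadratic_subfield K -> quadratic_subfield K' ->
  K != K' -> ln golden * ln silver <= a K * a K'.
Proof.
move=> quadK quadK' KK'.
have golden_gt0 : 0 < golden :> R := lt_trans ltr01 (golden_gt1 R).
have ln_golden_gt0 : 0 < ln (golden : R) := ln_gt0 (golden_gt1 R).
have ln_golden_le_silver : ln (golden : R) <= ln silver :=
  ln_le_ln golden_gt0 (golden_le_silver R).
have ln_silver_le K0 : silver <= iota (u K0) -> ln silver <= a K0.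
  exact/ln_le_ln/(lt_le_trans golden_gt0 (golden_le_silver R)).
have := ln_golden_le_a quadK; have := ln_golden_le_a quadK'.
have [/ln_silver_le|goldenK] := iota_u_cases quadK; first by nra.
have [/ln_silver_le|goldenK'] := iota_u_cases quadK'; first by nra.
have uKK' : u K = u K' by apply: (fmorph_inj iota); rewrite goldenK goldenK'.
have := u_in quadK'; rewrite -uKK' => uK'.
by rewrite (dim2_subfield_eq quadK quadK' (u_in quadK) uK' (u_irr quadK)) eqxx in KK'.
Qed.

(* [Gal(L / K)] is the kernel of [chiK K], so [chiK K] determines [K]. *)
Lemma chiK_inj K K' : quadratic_subfield K -> quadratic_subfield K' ->
  chiK K = chiK K' -> K = K'.
Proof.
move=> quadK quadK' chiKK'.
have galK : galois K {:L} by apply: galoisS galL; rewrite sub1v subvf.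
have u'K : u K' \in K.
  rewrite -(galois_fixedField galK); apply/fixedFieldP; first exact: memvf.
  move=> s sK; have := congr1 (fun c => c s) chiKK'; rewrite /chi.
  rewrite (fixed_gal (subvf K) sK (u_in quadK)) eqxx.
  by case: eqP => // _ /eqP; rewrite -subr_eq0 opprK -mulr2n pnatr_eq0.
by apply: dim2_subfield_eq quadK quadK' u'K (u_in quadK') (u_irr quadK').
Qed.

Lemma dotv_chiK K K' : quadratic_subfield K -> quadratic_subfield K' -> K != K' ->
  dotv (chiK K) (chiK K') = 0.
Proof.
move=> quadK quadK' KK'.
have [g chi_g] : exists g, chiK K g != chiK K' g.
  have [//|no_g] := pselect (exists g, chiK K g != chiK K' g).
  exfalso; move/eqP: KK'; apply; apply: chiK_inj quadK quadK' _; apply/funext => g.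
  have [//|ne] := eqVneq (chiK K g) (chiK K' g).
  by case: no_g; exists g.
have [m [n [_ uK_sqr]]] := u_sqr quadK; have [m' [n' [_ uK'_sqr]]] := u_sqr quadK'.
exact: dotv_chi_eq0 (u_irr quadK) uK_sqr (u_irr quadK') uK'_sqr chi_g.
Qed.

Lemma int_multiple_dotv_LOG_u K K' : quadratic_subfield K -> quadratic_subfield K' ->
  int_multiple (N * a K) (dotv (LOG iota (u K')) (chiK K)).
Proof.
move=> quadK quadK'; rewrite LOG_u // dotvZl.
have [<-|KK'] := eqVneq K K'; first by rewrite dotv_chi_self mulrC; apply: int_multiple_id.
by rewrite (dotv_chiK quadK' quadK) 1?eq_sym // mulr0; apply: int_multiple0.
Qed.

Lemma in_E_neq0 e : in_E u e -> e != 0.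
Proof.
elim=> [K quadK | | x y _ x0 _ y0 | x _ x0]; rewrite ?oner_neq0 ?mulf_neq0 ?invr_eq0 //.
by case: (u_fund quadK) => _ [].
Qed.

Lemma in_E_LOG_span e : in_E u e -> in_span Q (LOG iota e).
Proof.
elim=> [K quadK | | x y Ex Sx Ey Sy | x Ex Sx].
- by rewrite LOG_u //; apply: in_spanZ; exists K.
- by rewrite LOG1; apply: in_span0.
- by rewrite LOGM ?in_E_neq0 //; apply: in_spanD.
- by rewrite LOGV ?in_E_neq0 //; apply: in_spanN.
Qed.

Lemma in_E_LOG_dotv e K : in_E u e -> quadratic_subfield K ->
  int_multiple (N * a K) (dotv (LOG iota e) (chiK K)).
Proof.
move=> Ee quadK; elim: Ee => [K' quadK' | | x y Ex Ix Ey Iy | x Ex Ix].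
- exact: int_multiple_dotv_LOG_u.
- by rewrite LOG1 dotv0l; apply: int_multiple0.
- by rewrite LOGM ?in_E_neq0 // dotvDl; apply: int_multipleD.
- by rewrite LOGV ?in_E_neq0 // dotvNl; apply: int_multipleN.
Qed.

Lemma wedge_tensor (x y : place L -> R) :
  wedge x y = fun s t => tensor x y s t - tensor y x s t.
Proof. by apply/funext => s; apply/funext => t; rewrite /wedge /tensor [x t * _]mulrC. Qed.

Lemma dotm_wedge (x y c c' : place L -> R) :
  dotm (wedge x y) (tensor c c') = dotv x c * dotv y c' - dotv y c * dotv x c'.
Proof. by rewrite wedge_tensor dotmBl !dotm_tensor. Qed.

Section Wedge.
Variable w : place L -> place L -> R.
Hypothesis w_in : in_wedge2_LOG iota (in_E u) w.

Lemma in_wedge2_antisym s t : w s t = - w t s.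
Proof. by elim: w_in => [|w' e1 e2 _ IH _ _|w' e1 e2 _ IH _ _]; rewrite /wedge ?IH; lra. Qed.

Lemma in_wedge2_span2 : in_span2 Q w.
Proof.
have span2_wedge e1 e2 : in_E u e1 -> in_E u e2 ->
    in_span2 Q (wedge (LOG iota e1) (LOG iota e2)).
  move=> E1 E2; rewrite wedge_tensor.
  by apply: in_span2B; apply: in_span2_tensor; apply: in_E_LOG_span.
elim: w_in => [|w' e1 e2 _ IH E1 E2|w' e1 e2 _ IH E1 E2].
- exact: in_span2_0.
- exact: in_span2D IH (span2_wedge _ _ E1 E2).
- exact: in_span2B IH (span2_wedge _ _ E1 E2).
Qed.

Lemma in_wedge2_dotm K K' : quadratic_subfield K -> quadratic_subfield K' ->
  int_multiple (N * a K * (N * a K')) (dotm w (tensor (chiK K) (chiK K'))).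
Proof.
move=> quadK quadK'.
have dotm_wedge_int e1 e2 : in_E u e1 -> in_E u e2 -> int_multiple (N * a K * (N * a K'))
    (dotm (wedge (LOG iota e1) (LOG iota e2)) (tensor (chiK K) (chiK K'))).
  move=> E1 E2; rewrite dotm_wedge.
  by apply: int_multipleB; apply: int_multipleM; apply: in_E_LOG_dotv.
elim: w_in => [|w' e1 e2 _ IH E1 E2|w' e1 e2 _ IH E1 E2].
- by rewrite dotm0l; apply: int_multiple0.
- by rewrite dotmDl; apply: int_multipleD IH (dotm_wedge_int _ _ E1 E2).
- by rewrite dotmBl; apply: int_multipleB IH (dotm_wedge_int _ _ E1 E2).
Qed.

End Wedge.

Lemma wedge_norm1_ge w : in_wedge2_LOG iota (in_E u) w -> w <> (fun _ _ => 0) ->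
  N * N / 2 * (ln golden * ln silver) <= wedge_norm1 w.
Proof.
move=> w_in w_nz; have w_antisym := in_wedge2_antisym w_in.
have [K [K' [quadK quadK' wKK']]] : exists K K', [/\ quadratic_subfield K,
    quadratic_subfield K' & dotm w (tensor (chiK K) (chiK K')) != 0].
  have [//|none] := pselect (exists K K', [/\ quadratic_subfield K,
    quadratic_subfield K' & dotm w (tensor (chiK K) (chiK K')) != 0]).
  case: w_nz; apply: in_span2_eq0 (in_wedge2_span2 w_in) _.
  move=> _ _ [K quadK ->] [K' quadK' ->]; rewrite dotmC.
  have [//|nz] := eqVneq (dotm w (tensor (chiK K) (chiK K'))) 0.
  by case: none; exists K, K'.
have KK' : K != K'.
  by apply: contraNneq wKK' => <-; rewrite dotmC dotm_tensor_diag.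
have a_ge0 K0 : quadratic_subfield K0 -> 0 <= a K0 by move/u_gt1/ltW/ln_ge0.
have N_ge0 : 0 <= N by [].
have := ln_golden_silver_le_a quadK quadK' KK' => /(ler_wpM2l (mulr_ge0 N_ge0 N_ge0)).
have := int_multiple_le_norm _ (in_wedge2_dotm w_in quadK quadK') wKK'.
rewrite mulr_ge0 ?(mulr_ge0 N_ge0) ?a_ge0 // => /(_ isT).
have := norm_dotm_tensor_le w (normr_chi R (u K)) (normr_chi R (u K')).
by rewrite dotmC sum_norm_antisym // /wedge_norm1; lra.
Qed.

End MultiquadraticUnits.

Lemma gal1_setT (F : fieldType) (L : splittingFieldType F) :
  ('Gal({:L} / 1) = [set: gal_of {:L}])%g.
Proof. by apply/eqP; rewrite -finset.subTset galois_connection ?sub1v. Qed.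

Unset Implicit Arguments.

Theorem mainTheorem5 (n : nat) (L : splittingFieldType rat) (R : realType)
    (iota : {rmorphism L -> R}) (u : {subfield L} -> L) :
  (2 <= n)%N ->
  totally_real L ->
  galois 1 {:L} ->
  ('Gal({:L} / 1) \isog [set: 'rV['Z_2]_n])%g ->
  (forall K : {subfield L}, quadratic_subfield K -> fundamental_unit iota K (u K)) ->
  forall w : place L -> place L -> R,
    in_wedge2_LOG iota (in_E u) w ->
    w <> (fun _ _ => 0) ->
    2 ^+ (2 * n - 1) * ln ((1 + Num.sqrt 5) / 2) * ln (1 + Num.sqrt 2)
      <= wedge_norm1 w.
Proof.
move=> n_ge2 _ galL Gal_isog u_fund w w_in w_nz.
have card_place : #|{: place L}| = (2 ^ n)%N.
  rewrite -cardsT -gal1_setT (card_isog Gal_isog) cardsT card_mx card_ord.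
  by rewrite mul1n.
have -> : (2 : R) ^+ (2 * n - 1) = 2 ^+ n * 2 ^+ n / 2.
  by rewrite -exprD -[(n + n)%N](@subnK 1) ?exprD ?mulfK ?addnn -?mul2n //; lia.
rewrite -mulrA -natrX -card_place.
exact (wedge_norm1_ge galL u_fund w_in w_nz).
Qed.
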